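(* Let $X$ be a finite rack with connected components $C_1,\dots,C_k$. There exists $N$ (depending on $X$) such that for all integers $n_1,\dots,n_k\ge N$ with $n=n_1+\dots+n_k$, all nonnegative integers $m_1,\dots,m_k$ with $m=m_1+\dots+m_k$, and every $w\in X(m_1,\dots,m_k)/B_m$, the map \[ M_w:X^*(n_1,\dots,n_k)/B_n\to X^*(n_1+m_1,\dots,n_k+m_k)/B_{n+m},\qquad M_w(v)=wv \] (concatenation of representatives) is surjective.
   Context: A rack is a set $X$ with an operation $x^y$ such that $x\mapsto x^y$ is bijective for each $y$ and $(z^x)^y=(z^y)^{x^y}$. Its connected components are the classes of the smallest equivalence relation with $x\sim x^y$ for all $x,y$. $B_n$ (generators $\sigma_1,\dots,\sigma_{n-1}$) acts on $X^n$ from the right by $(\dots,x_i,x_{i+1},\dots)^{\sigma_i}=(\dots,x_{i+1},x_i^{x_{i+1}},\dots)$. For nonnegative integers $n_1,\dots,n_k$, $X(n_1,\dots,n_k)$ is the set of $(x_1,\dots,x_n)\in X^n$ with exactly $n_j$ entries in $C_j$ for each $j$, and $X^*(n_1,\dots,n_k)$ is the subset of those whose entries generate $X$ (i.e. lie in no proper subset $X_0$ closed under $x^y$); both are $B_n$-stable. Concatenation of tuples is compatible with $B_m\times B_{n}\hookrightarrow B_{m+n}$, giving a well-defined product of orbits. *)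

From mathcomp Require Import all_boot.
From Stdlib Require Import Relations.Relation_Operators.

Set Implicit Arguments.
Unset Strict Implicit.
Unset Printing Implicit Defensive.

(* A rack structure on a type X: op x y denotes x^y. *)
Definition is_rack (X : Type) (op : X -> X -> X) : Prop :=
  (forall y : X, bijective (fun x => op x y)) /\
  (forall x y z : X, op (op z x) y = op (op z y) (op x y)).

Definition rack_step (X : finType) (op : X -> X -> X) : rel X :=
  fun a b => [exists c, b == op a c].

Definition rack_step_sym (X : finType) (op : X -> X -> X) : rel X :=
  fun a b => rack_step op a b || rack_step op b a.

Definition rack_conn (X : finType) (op : X -> X -> X) : rel X :=
  connect (rack_step_sym op).

Definition rack_components (X : finType) (op : X -> X -> X) : {set {set X}} :=
  [set [set y | rack_conn op x y] | x : X].

(* X(n_C)_C : tuples with exactly n C entries in each component C. *)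
Definition in_Xcount (X : finType) (op : X -> X -> X) (n : {set X} -> nat)
    (s : seq X) : Prop :=
  forall C, C \in rack_components op -> count (fun x => x \in C) s = n C.

Definition generates (X : finType) (op : X -> X -> X) (s : seq X) : Prop :=
  forall X0 : {set X},
    (forall x y, x \in X0 -> y \in X0 -> op x y \in X0) ->
    {subset s <= X0} -> X0 = [set: X].

Definition in_Xstar (X : finType) (op : X -> X -> X) (n : {set X} -> nat)
    (s : seq X) : Prop :=
  in_Xcount op n s /\ generates op s.

Definition braid_step (X : Type) (op : X -> X -> X) (s t : seq X) : Prop :=
  exists (pre post : seq X) (x y : X),
    s = pre ++ x :: y :: post /\ t = pre ++ y :: op x y :: post.

(* Being in the same B_n-orbit: equivalence relation generated by the
   generator moves (i.e. the orbit relation of the group they generate). *)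
Definition braid_equiv (X : Type) (op : X -> X -> X) : seq X -> seq X -> Prop :=
  clos_refl_sym_trans (seq X) (braid_step op).

From mathcomp Require Import all_boot fingroup perm cyclic boolp.
From Stdlib Require Import Relations.Relation_Operators.

Set Implicit Arguments.
Unset Strict Implicit.
Unset Printing Implicit Defensive.

(** Let M = #|{perm X}|, so every right translation y |-> y^c satisfies
    iter M = id.  A block of M equal letters y^M then braids past any word
    without changing it, and pushing it through a prefix s1 of a word R turns
    it into (y^s1)^M.  When R generates X, the letters y reachable this way are
    closed under every y |-> y^c (for y = y'^b, self-distributivity gives
    y^(a^b) = (y'^a)^b), so the block can be replaced by x^M for any x in the
    component of y.  A word u with many letters in the component of x is
    therefore braid equivalent to x :: t' with t' still generating: keep one
    copy of each letter of u in front, so that generation survives, and find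
    by pigeonhole a letter z of that component occurring M times among the rest.
    Peeling off the letters of w one by one gives the theorem. *)

Section BraidMoves.
Variables (X : Type) (op : X -> X -> X).
Local Notation beq := (braid_equiv op).

Lemma beq_refl s : beq s s. Proof. exact: rst_refl. Qed.

Lemma beq_sym s t : beq s t -> beq t s. Proof. exact: rst_sym. Qed.

Lemma beq_trans s t r : beq s t -> beq t r -> beq s r.
Proof. exact: rst_trans. Qed.

Lemma beq_cat2 p q s t : beq s t -> beq (p ++ s ++ q) (p ++ t ++ q).
Proof.
elim=> {s t} [s t [pre [post [x [y [-> ->]]]]]| s | s t _ IH | s t r _ IH1 _ IH2].
- by apply: rst_step; exists (p ++ pre), (post ++ q), x, y; rewrite -!catA.
- exact: beq_refl.
- exact: beq_sym IH.
- exact: beq_trans IH1 IH2.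
Qed.

Lemma beq_catl p s t : beq s t -> beq (p ++ s) (p ++ t).
Proof. by move/(beq_cat2 p [::]); rewrite !cats0. Qed.

Lemma beq_catr q s t : beq s t -> beq (s ++ q) (t ++ q).
Proof. exact: beq_cat2 [::] q s t. Qed.

Lemma beq_cons a s t : beq s t -> beq (a :: s) (a :: t).
Proof. exact: beq_catl [:: a] s t. Qed.

Lemma beq_swap x y s : beq (x :: y :: s) (y :: op x y :: s).
Proof. by apply: rst_step; exists [::], s, x, y. Qed.

Lemma beq_pass_right a s : beq (a :: s) (s ++ [:: foldl op a s]).
Proof.
elim: s a => [|b s IH] a /=; first exact: beq_refl.
exact: beq_trans (beq_swap a b s) (beq_cons b (IH _)).
Qed.

Lemma beq_pass_left s a : beq (s ++ [:: a]) (a :: map (op^~ a) s).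
Proof.
elim: s => [|b s IH] /=; first exact: beq_refl.
exact: beq_trans (beq_cons b IH) (beq_swap b a _).
Qed.

Lemma beq_mask_front m t : exists t', beq t (mask m t ++ t').
Proof.
elim: t m => [|a t IH] [|[] m] /=; try by exists [::]; exact: beq_refl.
- by exists (a :: t); exact: beq_refl.
- have [t' tt'] := IH m; exists t'; exact: beq_cons.
- have [t' tt'] := IH m; exists (foldl op a (mask m t) :: t').
  apply: beq_trans (beq_cons a tt') _.
  by have := beq_catr t' (beq_pass_right a (mask m t)); rewrite -catA.
Qed.

End BraidMoves.

Section FiniteFacts.
Variable T : finType.
Local Notation M := #|{perm T}|.

Lemma card_perm_gt0 : 0 < M.
Proof. by apply/card_gt0P; exists 1%g. Qed.

Lemma iter_card_perm (f : T -> T) : injective f -> iter M f =1 id.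
Proof.
move=> injf y /=; have := expg_cardG (in_setT (perm injf)).
move/(congr1 (fun p : {perm T} => p y)); rewrite permX perm1 => fixed_y.
by rewrite -[RHS]fixed_y cardsT; apply: eq_iter => z; rewrite permE.
Qed.

Lemma closed_inj_inv (P : T -> Prop) (f : T -> T) :
  injective f -> (forall y, P y -> P (f y)) -> forall y, P (f y) -> P y.
Proof.
move=> injf Pf y Pfy; rewrite -[y](iter_card_perm injf) -(prednK card_perm_gt0).
by rewrite iterSr; elim: M.-1 => //= k IH; exact: Pf.
Qed.

Lemma subseq_nseq_count (z : T) k s : k <= count_mem z s -> subseq (nseq k z) s.
Proof.
move=> le_k; apply: subseq_trans (filter_subseq (pred1 z) s).
have /all_pred1P -> : all (pred1 z) (filter (pred1 z) s) by exact: filter_all.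
by rewrite size_filter -(subnKC le_k) nseqD prefix_subseq.
Qed.

Lemma count_le_sum_count_mem (A : {set T}) s :
  count (fun x => x \in A) s <= \sum_(z in A) count_mem z s.
Proof.
elim: s => //= a s IH; rewrite big_split /= leq_add //.
by case aA: (a \in A) => //; rewrite (bigD1 a) //= eqxx.
Qed.

Lemma pigeonhole_count (A : {set T}) k s :
  #|A| * k < count (fun x => x \in A) s -> exists2 z, z \in A & k < count_mem z s.
Proof.
move=> lt_As; apply/exists_inP; apply: contraLR lt_As.
rewrite negb_exists_in -leqNgt => /forall_inP small.
apply: leq_trans (count_le_sum_count_mem A s) _.
by rewrite -sum_nat_const; apply: leq_sum => z zA; rewrite leqNgt small.
Qed.

End FiniteFacts.

Section Rack.
Variables (X : finType) (op : X -> X -> X).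
Hypothesis rackX : is_rack op.
Local Notation beq := (braid_equiv op).
Local Notation M := #|{perm X}|.
Local Notation component x := [set y | rack_conn op x y].
Local Notation cnt C s := (count (fun x => x \in C) s).

Lemma rack_act_inj c : injective (op^~ c).
Proof. exact: bij_inj (proj1 rackX c). Qed.

Lemma foldl_act_inj s : injective (foldl op ^~ s).
Proof. by elim: s => [|c s IH] y z //= /IH; exact: rack_act_inj. Qed.

Lemma component_mem x : component x \in rack_components op.
Proof. exact: imset_f. Qed.

Lemma mem_component_act C c y :
  C \in rack_components op -> (op y c \in C) = (y \in C).
Proof.
case/imsetP=> x _ ->; rewrite !inE.
apply/idP/idP => xy; apply: connect_trans xy (connect1 _); apply/orP.
  by right; apply/existsP; exists c.
by left; apply/existsP; exists c.
Qed.

Lemma count_component_beq C s t :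
  C \in rack_components op -> beq s t -> cnt C s = cnt C t.
Proof.
move=> compC; elim=> {s t} [s t [pre [post [x [y [-> ->]]]]] | s | s t _ -> | s t r _ -> _ ->] //.
by rewrite !count_cat /= mem_component_act //; congr (_ + _); exact: addnCA.
Qed.

Lemma generates_subset s t : generates op s -> {subset s <= t} -> generates op t.
Proof. by move=> gen_s st X0 closedX0 tX0; apply: gen_s closedX0 _ => z /st /tX0. Qed.

Lemma beq_subseq_front s t : subseq s t -> exists t', beq t (s ++ t').
Proof. by case/subseqP=> m _ ->; exact: beq_mask_front. Qed.

Lemma foldl_nseq_act y a : foldl op y (nseq M a) = y.
Proof.
rewrite -[RHS](iter_card_perm (@rack_act_inj a)).
by elim: M y => //= k IH y; rewrite IH -iterSr.
Qed.

Lemma beq_nseq_commute y s : beq (s ++ nseq M y) (nseq M y ++ s).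
Proof.
elim: s => [|a s IH] /=; first by rewrite cats0; exact: beq_refl.
apply: beq_trans (beq_cons a IH) _.
by have := beq_catr s (beq_pass_right op a (nseq M y)); rewrite foldl_nseq_act -catA.
Qed.

Lemma beq_nseq_pass y s : beq (nseq M y ++ s) (s ++ nseq M (foldl op y s)).
Proof.
elim: s y => [|a s IH] y /=; first by rewrite cats0; exact: beq_refl.
have := beq_catr s (beq_pass_left op (nseq M y) a); rewrite -catA map_nseq /= => pass_a.
exact: beq_trans pass_a (beq_cons a (IH _)).
Qed.

Lemma beq_nseq_act_prefix y s1 s2 :
  beq (nseq M y ++ s1 ++ s2) (nseq M (foldl op y s1) ++ s1 ++ s2).
Proof.
have := beq_catr s2 (beq_trans (beq_nseq_pass y s1) (beq_nseq_commute _ s1)).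
by rewrite -!catA.
Qed.

Lemma act_closed_of_prefix_closed (P : X -> Prop) R :
  generates op R -> (forall s1 s2 y, R = s1 ++ s2 -> P y -> P (foldl op y s1)) ->
  forall c y, P y -> P (op y c).
Proof.
move=> genR prefixP.
pose good := [set c | `[< forall y, P y -> P (op y c) >]].
have good_full : good = [set: X].
  apply: genR => [a b | r Rr].
  - rewrite !inE => /asboolP Pa /asboolP Pb; apply/asboolP => y Py.
    have injb := @rack_act_inj b.
    rewrite -[y](f_invF injb) /= -(proj2 rackX); apply/Pb/Pa.
    by apply: (closed_inj_inv (P := P) injb Pb); rewrite [op _ b](f_invF injb).
  - rewrite inE; apply/asboolP => y Py.
    move: prefixP; case/splitPr: Rr => s1 s2 prefixP.
    have P_s1 z : P z -> P (foldl op z s1) by exact: prefixP.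
    have inj_s1 := @foldl_act_inj s1.
    rewrite -[y](f_invF inj_s1) /= -foldl_rcons.
    apply: (prefixP _ s2); first by rewrite cat_rcons.
    by apply: (closed_inj_inv (P := P) inj_s1 P_s1); rewrite [foldl _ _ s1](f_invF inj_s1).
move=> c; have : c \in good by rewrite good_full inE.
by rewrite inE => /asboolP.
Qed.

Lemma rack_conn_closed (P : X -> Prop) :
  (forall c y, P y -> P (op y c)) -> forall x y, rack_conn op x y -> P x -> P y.
Proof.
move=> Pact x y xy Px.
have sym_step : connect_sym (rack_step_sym op).
  by apply: sym_connect_sym => a b; rewrite /rack_step_sym orbC.
have step_iff a b : rack_step op a b -> P a <-> P b.
  case/existsP=> c /eqP ->; split; first exact: Pact.
  exact: (closed_inj_inv (P := P) (@rack_act_inj c) (Pact c)).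
have closedP : closed (rack_step_sym op) (fun z => `[< P z >]).
  by move=> a b /orP [] /step_iff ab; [| apply: esym]; exact: asbool_equiv_eq.
by have := closed_connect closedP xy; rewrite !unfold_in (asboolT Px) => /esym/asboolP.
Qed.

Lemma beq_nseq_conn R x z :
  generates op R -> rack_conn op x z -> beq (nseq M x ++ R) (nseq M z ++ R).
Proof.
move=> genR xz; pose P y := beq (nseq M x ++ R) (nseq M y ++ R).
apply: (rack_conn_closed (P := P) _ xz); last exact: beq_refl.
apply: act_closed_of_prefix_closed genR _ => s1 s2 y def_R; rewrite /P def_R => Py.
exact: beq_trans Py (beq_nseq_act_prefix y s1 s2).
Qed.

Lemma beq_pull_front x t :
  generates op t -> #|X| + #|X| * M <= cnt (component x) t ->
  exists t', beq t (x :: t') /\ generates op t'.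
Proof.
set C := component x => gen_t big_t.
have [t1 t_t1] := beq_subseq_front (undup_subseq t).
have big_t1 : #|X| * M <= cnt C t1.
  rewrite -(leq_add2l (cnt C (undup t))) -count_cat.
  rewrite -(count_component_beq (component_mem x) t_t1).
  apply: leq_trans big_t; rewrite leq_add2r.
  apply: leq_trans (count_size _ _) _.
  by rewrite -(card_uniqP (undup_uniq t)) max_card.
have [z Cz many_z] : exists2 z, z \in C & M.-1 < count_mem z t1.
  apply: pigeonhole_count; apply: leq_trans big_t1.
  apply: leq_ltn_trans (leq_mul (max_card C) (leqnn M.-1)) _.
  by rewrite ltn_mul2l ltn_predL card_perm_gt0 andbT; apply/card_gt0P; exists x.
rewrite prednK ?card_perm_gt0 // in many_z.
have [t2 t1_t2] := beq_subseq_front (subseq_nseq_count many_z).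
set R := undup t ++ t2.
have gen_R : generates op R.
  by apply: generates_subset gen_t _ => y; rewrite mem_cat -mem_undup => ->.
have t_zR : beq t (nseq M z ++ R).
  apply: beq_trans t_t1 (beq_trans (beq_catl _ t1_t2) _).
  by have := beq_catr t2 (beq_nseq_commute z (undup t)); rewrite -!catA.
have xz : rack_conn op x z by rewrite inE in Cz.
have := beq_trans t_zR (beq_sym (beq_nseq_conn gen_R xz)).
rewrite -(prednK (card_perm_gt0 X)) /= => t_xR.
exists (nseq M.-1 x ++ R); split => //.
by apply: generates_subset gen_R _ => y Ry; rewrite mem_cat Ry orbT.
Qed.

Lemma beq_peel (n : {set X} -> nat) :
  (forall C, C \in rack_components op -> #|X| + #|X| * M <= n C) ->
  forall w u, generates op u ->
  (forall C, C \in rack_components op -> cnt C u = n C + cnt C w) ->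
  exists v, in_Xstar op n v /\ beq (w ++ v) u.
Proof.
move=> big_n; elim=> [|x w IH] u gen_u cnt_u.
  exists u; split; last exact: beq_refl.
  by split=> // C compC; rewrite cnt_u // addn0.
have big_u : #|X| + #|X| * M <= cnt (component x) u.
  by rewrite cnt_u ?component_mem // (leq_trans (big_n _ (component_mem x))) ?leq_addr.
have [t [u_xt gen_t]] := beq_pull_front gen_u big_u.
have cnt_t C : C \in rack_components op -> cnt C t = n C + cnt C w.
  move=> compC; apply/eqP; rewrite -(eqn_add2l (x \in C)) addnCA.
  by have := count_component_beq compC u_xt; rewrite cnt_u //= => <-.
have [v [star_v wv_t]] := IH t gen_t cnt_t.
exists v; split => //.
exact: beq_trans (beq_cons x wv_t) (beq_sym u_xt).
Qed.

End Rack.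

Theorem proposition4p22 (X : finType) (op : X -> X -> X) (Hrack : is_rack op) :
  exists N : nat,
    forall (n m : {set X} -> nat),
      (forall C, C \in rack_components op -> N <= n C) ->
      forall w : seq X, in_Xcount op m w ->
      forall u : seq X, in_Xstar op (fun C => n C + m C) u ->
      exists v : seq X, in_Xstar op n v /\ braid_equiv op (w ++ v) u.
Proof.
exists (#|X| + #|X| * #|{perm X}|) => n m big_n w cnt_w u [cnt_u gen_u].
apply: (beq_peel Hrack) => // C compC.
by rewrite cnt_u // cnt_w.
Qed.
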